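(* Let $S$ be a semigroup. If $\ell^{1}(S)^{**}$ is pseudo-contractible, then $S$ is amenable.
   Context: $\ell^1(S)$ is the semigroup algebra of $S$ and $\ell^1(S)^{**}$ carries the first Arens product. A Banach algebra $A$ is pseudo-contractible if there is a (not necessarily bounded) net $(m_\alpha)$ in $A\otimes_p A$ such that $a\cdot m_\alpha=m_\alpha\cdot a$ and $\pi_A(m_\alpha)a\to a$ for all $a\in A$, where $\pi_A(a\otimes b)=ab$ and the module actions are $a\cdot(b\otimes c)=ab\otimes c$, $(b\otimes c)\cdot a=b\otimes ca$. With $\phi$ the augmentation character on $\ell^1(S)$, $S$ is left (right) amenable if there is $m\in\ell^1(S)^{**}$ with $\delta_s\cdot m=m$ (resp. $m\cdot\delta_s=m$) for all $s\in S$ and $\|m\|=m(\phi)=1$; $S$ is amenable if it is both left and right amenable. *)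

From HB Require Import structures.
From mathcomp Require Import all_boot all_order all_algebra.
From mathcomp Require Import all_classical all_reals all_analysis.
From mathcomp Require Import complex.
Set Implicit Arguments. Unset Strict Implicit. Unset Printing Implicit Defensive.
Import Order.TTheory GRing.Theory Num.Theory.
Import numFieldNormedType.Exports.
Local Open Scope ring_scope.
Local Open Scope classical_set_scope.

Section Defs.
Variable K : numFieldType.   (* scalar field; instantiated with R[i] *)
Variable S : Type.
Variable op : S -> S -> S.

Definition supnorm_le (f : S -> K) (c : K) : Prop := forall s, `|f s| <= c.

Definition bounded (f : S -> K) : Prop := exists c : K, supnorm_le f c.

(* Carrier of l^1(S)^** = dual of l^oo(S) : functionals on S -> K; only their values on
   bounded functions matter. *)
Definition BD := (S -> K) -> K.

Definition normBD_le (Phi : BD) (c : K) : Prop :=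
  forall (f : S -> K) (c' : K), 0 <= c' -> supnorm_le f c' -> `|Phi f| <= c * c'.

Definition isBD (Phi : BD) : Prop :=
  (forall (k : K) (f g : S -> K), bounded f -> bounded g ->
      Phi (fun s => k * f s + g s) = k * Phi f + Phi g)
  /\ exists c : K, normBD_le Phi c.

Definition normBD_eq (Phi : BD) (c : K) : Prop :=
  normBD_le Phi c /\ forall c', normBD_le Phi c' -> c <= c'.

Definition eqBD (Phi Psi : BD) : Prop := forall f, bounded f -> Phi f = Psi f.

(* first Arens product on l^1(S)^** = dual of l^oo(S):
   (Phi [] Psi)(f) = Phi (s |-> Psi (t |-> f (s t))) *)
Definition arens (Phi Psi : BD) : BD :=
  fun f => Phi (fun s => Psi (fun t => f (op s t))).

(* canonical image of delta_s in l^1(S)^** *)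
Definition evBD (s : S) : BD := fun f => f s.

(* augmentation character phi of l^1(S), as an element of l^oo(S) *)
Definition augm : S -> K := fun _ => 1.

(* Representations of elements of the projective tensor product A (x)_p A,
   A = l^1(S)^**: u = sum_n a_n (x) b_n with sum_n ||a_n|| ||b_n|| < oo. *)
Definition TP := nat -> BD * BD.

Definition isTP (u : TP) : Prop :=
  (forall n, isBD (u n).1 /\ isBD (u n).2) /\
  exists (c d : nat -> K) (M : K),
    (forall n, 0 <= c n /\ 0 <= d n /\ normBD_le (u n).1 (c n) /\ normBD_le (u n).2 (d n))
    /\ forall N, \sum_(n < N) c n * d n <= M.

(* bounded bilinear forms on A x A, i.e. the dual of A (x)_p A *)
Definition isBB (B : BD -> BD -> K) : Prop :=
  (forall (k : K) (a a' b : BD), isBD a -> isBD a' -> isBD b ->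
      B (fun f => k * a f + a' f) b = k * B a b + B a' b)
  /\ (forall (k : K) (a b b' : BD), isBD a -> isBD b -> isBD b' ->
      B a (fun f => k * b f + b' f) = k * B a b + B a b')
  /\ exists M : K, forall (a b : BD) (ca cb : K), isBD a -> isBD b ->
      normBD_le a ca -> normBD_le b cb -> `|B a b| <= M * ca * cb.

(* equality in A (x)_p A : same pairing with every bounded bilinear form *)
Definition eqTP (u v : TP) : Prop :=
  forall B, isBB B -> exists l : K,
    (fun N => \sum_(n < N) B (u n).1 (u n).2) @ \oo --> l /\
    (fun N => \sum_(n < N) B (v n).1 (v n).2) @ \oo --> l.

Definition actL (a : BD) (u : TP) : TP := fun n => (arens a (u n).1, (u n).2).
Definition actR (u : TP) (a : BD) : TP := fun n => ((u n).1, arens (u n).2 a).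

Definition piA (u : TP) : BD :=
  fun f => limn (fun N => \sum_(n < N) arens (u n).1 (u n).2 f).

Definition bidual_pseudo_contractible : Prop :=
  exists (I : Type) (le : I -> I -> Prop) (m : I -> TP),
    [/\ inhabited I, (forall i, le i i),
        (forall i j k, le i j -> le j k -> le i k) &
        (forall i j, exists k, le i k /\ le j k)]
    /\ (forall i, isTP (m i))
    /\ (forall a, isBD a -> forall i, eqTP (actL a (m i)) (actR (m i) a))
    /\ (forall a, isBD a -> forall eps : K, 0 < eps ->
          exists i0, forall i, le i0 i ->
            normBD_le (fun f => arens (piA (m i)) a f - a f) eps).

Definition left_amenable : Prop :=
  exists m : BD, isBD m /\ (forall s, eqBD (arens (evBD s) m) m)
                 /\ normBD_eq m 1 /\ m augm = 1.

Definition right_amenable : Prop :=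
  exists m : BD, isBD m /\ (forall s, eqBD (arens m (evBD s)) m)
                 /\ normBD_eq m 1 /\ m augm = 1.

Definition amenable : Prop := left_amenable /\ right_amenable.

End Defs.

From mathcomp Require Import all_boot all_order all_algebra.
From mathcomp Require Import all_classical all_reals all_analysis.
From mathcomp Require Import complex ring lra.
Import Order.TTheory GRing.Theory Num.Theory.
Import numFieldNormedType.Exports.
Set Implicit Arguments. Unset Strict Implicit. Unset Printing Implicit Defensive.
Local Open Scope ring_scope.
Local Open Scope complex_scope.
Local Open Scope classical_set_scope.

(* Fix m = sum_n a_n (x) b_n commuting with every element and with
   || pi(m) delta_s0 - delta_s0 || <= 1/2.  Pairing the commutation relations
   m.delta_s = delta_s.m with the bilinear forms (x, y) |-> x(f) y(1) and
   (x, y) |-> x(1) y(f) shows that f |-> sum_n a_n(f) b_n(1) is left invariant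
   and f |-> sum_n b_n(f) a_n(1) is right invariant; both take the value
   pi(m)(1) <> 0 at the constant 1.  An invariant bounded functional N with
   N(1) = 1 is turned into an invariant mean as in Day's theorem: the positive
   part N+(g) = sup {N u | 0 <= u <= g} of its real part is additive and
   invariant on nonnegative functions, extends linearly, and after dividing by
   N+(1) >= 1 and complexifying it is a positive functional of norm 1. *)

(* The real and imaginary parts of R[i] itself, not the generic Num.Re/Num.Im. *)
Local Notation Re := complex.Re.
Local Notation Im := complex.Im.

Definition invariant (K : numFieldType) (S J : Type) (act : J -> S -> S)
    (M : BD K S) : Prop :=
  forall j f, bounded f -> M (fun t => f (act j t)) = M f.

Definition invariant_mean (K : numFieldType) (S J : Type) (act : J -> S -> S)
    (M : BD K S) : Prop :=
  [/\ isBD M, invariant act M, normBD_eq M 1 & M (@augm K S) = 1].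

Section BoundedFunctions.
Variables (K : numFieldType) (S : Type).
Implicit Types (k c : K) (f g : S -> K).

Lemma boundedD f g : bounded f -> bounded g -> bounded (fun s => f s + g s).
Proof.
move=> [a fa] [b gb]; exists (a + b) => s.
exact: le_trans (ler_normD _ _) (lerD (fa s) (gb s)).
Qed.

Lemma boundedZ k f : bounded f -> bounded (fun s => k * f s).
Proof. by move=> [a fa]; exists (`|k| * a) => s; rewrite normrM ler_wpM2l. Qed.

Lemma boundedN f : bounded f -> bounded (fun s => - f s).
Proof. by move=> [a fa]; exists a => s; rewrite normrN. Qed.

Lemma bounded_cst k : bounded (fun _ : S => k).
Proof. by exists `|k|. Qed.

Lemma bounded_comp (T : Type) (h : T -> S) f : bounded f -> bounded (fun t => f (h t)).
Proof. by move=> [a fa]; exists a. Qed.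

Lemma supnorm_le_normr f c : supnorm_le f c -> supnorm_le f `|c|.
Proof.
move=> fc s; have c0 : 0 <= c := le_trans (normr_ge0 _) (fc s).
by rewrite [`|c|]ger0_norm // fc.
Qed.

Lemma supnorm_le_augm : supnorm_le (@augm K S) 1.
Proof. by move=> s; rewrite normr1. Qed.

End BoundedFunctions.

Arguments bounded_cst {K S}.
Arguments supnorm_le_augm {K S}.

Section LinearFunctionals.
Variables (K : numFieldType) (S : Type) (Phi : BD K S).
Hypothesis Phi_BD : isBD Phi.

Lemma BD_linearD f g : bounded f -> bounded g -> Phi (fun s => f s + g s) = Phi f + Phi g.
Proof.
move=> bf bg; rewrite -[Phi f]mul1r -Phi_BD.1 //.
by congr Phi; apply: funext => s; rewrite mul1r.
Qed.

Lemma BD_linear0 : Phi (fun _ => 0) = 0.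
Proof.
apply: (addrI (Phi (fun _ => 0))); rewrite addr0 -BD_linearD; try exact: bounded_cst.
by congr Phi; apply: funext => s; rewrite addr0.
Qed.

Lemma BD_linearZ k f : bounded f -> Phi (fun s => k * f s) = k * Phi f.
Proof.
move=> bf; rewrite -[RHS]addr0 -BD_linear0 -Phi_BD.1 //; last exact: bounded_cst.
by congr Phi; apply: funext => s; rewrite addr0.
Qed.

Lemma BD_linear_cst k : Phi (fun _ => k) = k * Phi (@augm K S).
Proof.
rewrite -BD_linearZ; last exact: bounded_cst.
by congr Phi; apply: funext => s; rewrite /augm mulr1.
Qed.

Lemma isBD_mulr k : isBD (fun f => Phi f * k).
Proof.
have [Phi_lin [c Phi_c]] := Phi_BD; split.
  by move=> k' f g bf bg; rewrite Phi_lin // mulrDl mulrA.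
exists (c * `|k|) => f c' c'0 fc'; rewrite normrM mulrAC ler_wpM2r //; exact: Phi_c.
Qed.

End LinearFunctionals.

Section ComplexBounds.
Variables (R : realType) (S : Type).
Implicit Types (z w k c : R[i]) (f : S -> R[i]).

Lemma normc_real (x : R) : `|x%:C| = `|x|%:C :> R[i].
Proof. by simpc; rewrite expr0n addr0 sqrtr_sqr. Qed.

Lemma Re_norm_le z c : `|z| <= c -> `|Re z| <= Re c.
Proof. by move=> zc; have := le_trans (normc_ge_Re z) zc; rewrite lecE => /andP[_]. Qed.

Lemma Im_norm_le z c : `|z| <= c -> `|Im z| <= Re c.
Proof.
move=> zc; rewrite -normrN -ReiNIm; apply: Re_norm_le.
by rewrite normrM (_ : `|'i| = 1) ?mulr1 //; simpc; rewrite expr0n expr1n add0r sqrtr1.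
Qed.

Lemma Re_mulr_real z (x : R) : Re (z * x%:C) = Re z * x.
Proof. by case: z => a b; simpc => /=; ring. Qed.

Lemma Re_mulD k z w : Re (k * z + w) = Re k * Re z + (- Im k * Im z + Re w).
Proof. by case: z => a b; case: w => c d; case: k => e f; simpc => /=; ring. Qed.

Lemma Im_mulD k z w : Im (k * z + w) = Re k * Im z + (Im k * Re z + Im w).
Proof. by case: z => a b; case: w => c d; case: k => e f; simpc => /=; ring. Qed.

Lemma bounded_Re f : bounded f -> bounded (fun s => Re (f s)).
Proof. by move=> [c fc]; exists (Re c) => s; exact: Re_norm_le. Qed.

Lemma bounded_Im f : bounded f -> bounded (fun s => Im (f s)).
Proof. by move=> [c fc]; exists (Re c) => s; exact: Im_norm_le. Qed.

Lemma bounded_real_complex (u : S -> R) : bounded u -> bounded (fun s => (u s)%:C).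
Proof. by move=> [b ub]; exists b%:C => s; rewrite normc_real lecR. Qed.

End ComplexBounds.

Section DayMean.
Variables (R : realType) (S J : Type) (act : J -> S -> S) (N : BD R S).
Hypotheses (N_BD : isBD N) (N_inv : invariant act N) (N_augm : N (@augm R S) = 1).
Implicit Types (k b : R) (f g u : S -> R).

Definition under g u := forall s, 0 <= u s <= g s.

Definition nonneg_bounded g := (forall s, 0 <= g s) /\ bounded g.

Definition Nplus g := sup [set N u | u in under g].

Lemma under_supnorm_le g u b : supnorm_le g b -> under g u -> supnorm_le u b.
Proof.
move=> gb gu s; have /andP[u0 ug] := gu s.
by rewrite ger0_norm //; apply: le_trans ug (le_trans (ler_norm _) (gb s)).
Qed.

Lemma under_bounded g u : nonneg_bounded g -> under g u -> bounded u.
Proof. by move=> [_ [b gb]] gu; exists b; exact: under_supnorm_le gu. Qed.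

Lemma under0 g : nonneg_bounded g -> under g (fun _ => 0).
Proof. by move=> [g0 _] s; rewrite lexx g0. Qed.

Lemma Nplus_has_sup g : nonneg_bounded g -> has_sup [set N u | u in under g].
Proof.
move=> g_nb; split; first by exists (N (fun _ => 0)), (fun _ => 0); first exact: under0.
have [_ [c Nc]] := N_BD; have [_ [b gb]] := g_nb.
exists (c * `|b|) => _ [u gu <-]; apply: le_trans (ler_norm _) (Nc _ _ _ _) => //.
exact: under_supnorm_le (supnorm_le_normr gb) gu.
Qed.

Lemma Nplus_ub g u : nonneg_bounded g -> under g u -> N u <= Nplus g.
Proof. by move=> g_nb gu; apply: sup_upper_bound (Nplus_has_sup g_nb) _ _; exists u. Qed.

Lemma Nplus_le g x : nonneg_bounded g -> (forall u, under g u -> N u <= x) -> Nplus g <= x.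
Proof.
move=> g_nb Nx; apply: ge_sup; first by exists (N (fun _ => 0)), (fun _ => 0); first exact: under0.
by move=> _ [u gu <-]; exact: Nx.
Qed.

Lemma Nplus_ge0 g : nonneg_bounded g -> 0 <= Nplus g.
Proof. by move=> g_nb; rewrite -(BD_linear0 N_BD); exact: Nplus_ub (under0 g_nb). Qed.

Lemma nonneg_boundedD g1 g2 :
  nonneg_bounded g1 -> nonneg_bounded g2 -> nonneg_bounded (fun s => g1 s + g2 s).
Proof. by move=> [g10 g1b] [g20 g2b]; split; [move=> s; exact: addr_ge0 | exact: boundedD]. Qed.

Lemma nonneg_boundedZ k g : 0 <= k -> nonneg_bounded g -> nonneg_bounded (fun s => k * g s).
Proof. by move=> k0 [g0 gb]; split; [move=> s; exact: mulr_ge0 | exact: boundedZ]. Qed.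

Lemma nonneg_bounded_cst b : 0 <= b -> nonneg_bounded (fun _ => b).
Proof. by move=> b0; split => //; exact: bounded_cst. Qed.

Lemma nonneg_bounded_comp j g : nonneg_bounded g -> nonneg_bounded (fun t => g (act j t)).
Proof. by move=> [g0 gb]; split; [move=> s; exact: g0 | exact: bounded_comp]. Qed.

Lemma NplusD g1 g2 : nonneg_bounded g1 -> nonneg_bounded g2 ->
  Nplus (fun s => g1 s + g2 s) = Nplus g1 + Nplus g2.
Proof.
move=> g1_nb g2_nb; have g12_nb := nonneg_boundedD g1_nb g2_nb.
apply/eqP; rewrite eq_le; apply/andP; split.
  apply: Nplus_le => // u gu; pose u1 s := Num.min (u s) (g1 s).
  have u1_under : under g1 u1.
    move=> s; have /andP[u0 _] := gu s; have g10 := g1_nb.1 s.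
    by rewrite /u1; case: (leP (u s) (g1 s)) => ?; apply/andP; split; lra.
  have u2_under : under g2 (fun s => u s - u1 s).
    move=> s; have /andP[u0 ug] := gu s; have g20 := g2_nb.1 s.
    by rewrite /u1; case: (leP (u s) (g1 s)) => ?; apply/andP; split; lra.
  have -> : N u = N u1 + N (fun s => u s - u1 s).
    rewrite -(BD_linearD N_BD) //;
      [|exact: under_bounded g1_nb u1_under|exact: under_bounded g2_nb u2_under].
    by congr N; apply: funext => s; rewrite addrC subrK.
  by rewrite lerD // Nplus_ub.
suff : Nplus g1 <= Nplus (fun s => g1 s + g2 s) - Nplus g2 by lra.
apply: Nplus_le => // u1 u1_under.
suff : Nplus g2 <= Nplus (fun s => g1 s + g2 s) - N u1 by lra.
apply: Nplus_le => // u2 u2_under.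
rewrite lerBrDl -(BD_linearD N_BD);
  [|exact: under_bounded g1_nb u1_under|exact: under_bounded g2_nb u2_under].
apply: Nplus_ub => // s; have /andP[? ?] := u1_under s; have /andP[? ?] := u2_under s.
by apply/andP; split; lra.
Qed.

Lemma Nplus0 : Nplus (fun _ => 0) = 0.
Proof.
have nb0 := nonneg_bounded_cst (lexx 0).
apply: (addIr (Nplus (fun _ => 0))); rewrite add0r -NplusD //.
by congr Nplus; apply: funext => s; rewrite addr0.
Qed.

Lemma NplusZ k g : 0 <= k -> nonneg_bounded g -> Nplus (fun s => k * g s) = k * Nplus g.
Proof.
move=> k0 g_nb; have [->|k_neq0] := eqVneq k 0.
  by rewrite mul0r -[RHS]Nplus0; congr Nplus; apply: funext => s; rewrite mul0r.
have k_gt0 : 0 < k by rewrite lt_def k_neq0 k0.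
have kg_nb := nonneg_boundedZ k0 g_nb.
apply/eqP; rewrite eq_le; apply/andP; split.
  apply: Nplus_le => // u u_under.
  have u_bd := under_bounded kg_nb u_under.
  rewrite -[u](_ : (fun s => k * (k^-1 * u s)) = u); last first.
    by apply: funext => s; rewrite mulrA mulfV // mul1r.
  rewrite (BD_linearZ N_BD) ?ler_wpM2l //; last exact: boundedZ.
  apply: Nplus_ub => // s; have /andP[u0 ukg] := u_under s.
  by rewrite mulr_ge0 ?invr_ge0 // ler_pdivrMl.
rewrite -ler_pdivlMl //; apply: Nplus_le => // u u_under.
rewrite ler_pdivlMl // -(BD_linearZ N_BD); last exact: under_bounded g_nb u_under.
apply: Nplus_ub => // s; have /andP[u0 ug] := u_under s.
by rewrite mulr_ge0 // ler_wpM2l.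
Qed.

(* Only one inequality follows directly from the invariance of N; applying it
   to g and to |b| - g, whose values sum to a constant, forces equality. *)
Lemma Nplus_comp j g : nonneg_bounded g -> Nplus (fun t => g (act j t)) = Nplus g.
Proof.
have Nplus_le_comp h : nonneg_bounded h -> Nplus h <= Nplus (fun t => h (act j t)).
  move=> h_nb; apply: Nplus_le => // u hu.
  rewrite -(N_inv j (under_bounded h_nb hu)).
  by apply: Nplus_ub; [exact: nonneg_bounded_comp | move=> s; exact: hu].
move=> g_nb; have [g0 [b gb]] := g_nb.
have cg_nb : nonneg_bounded (fun s => `|b| - g s).
  split; last by apply: boundedD; [exact: bounded_cst | exact: boundedN g_nb.2].
  by move=> s; rewrite subr_ge0 (le_trans (ler_norm _) (supnorm_le_normr gb s)).
have split_cst h : nonneg_bounded h -> nonneg_bounded (fun s => `|b| - h s) ->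
    Nplus h + Nplus (fun s => `|b| - h s) = Nplus (fun _ => `|b|).
  by move=> h_nb ch_nb; rewrite -NplusD //; congr Nplus; apply: funext => s; rewrite subrKC.
have := split_cst _ g_nb cg_nb.
have := split_cst _ (nonneg_bounded_comp j g_nb) (nonneg_bounded_comp j cg_nb).
have := Nplus_le_comp _ g_nb; have := Nplus_le_comp _ cg_nb.
lra.
Qed.

Definition posp f s := Num.max (f s) 0.
Definition negp f s := Num.max (- f s) 0.

Lemma posp_negp f s : f s = posp f s - negp f s.
Proof. by rewrite /posp /negp; case: (leP (f s) 0) => ?; case: (leP (- f s) 0) => ?; lra. Qed.

Lemma nonneg_bounded_posp f : bounded f -> nonneg_bounded (posp f).
Proof.
move=> [b fb]; split=> [s|]; first by rewrite /posp le_max lexx orbT.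
exists b => s; have := fb s; have := ler_norm (f s); rewrite /posp.
case: (leP (f s) 0) => [_ _ /(le_trans (normr_ge0 _))|?]; first by rewrite normr0.
by rewrite ger0_norm //; lra.
Qed.

Lemma nonneg_bounded_negp f : bounded f -> nonneg_bounded (negp f).
Proof.
by move=> f_bd; have := nonneg_bounded_posp (boundedN f_bd); congr nonneg_bounded.
Qed.

Definition Nlin f := Nplus (posp f) - Nplus (negp f).

Lemma Nlin_decomp f u v : nonneg_bounded u -> nonneg_bounded v ->
  (forall s, f s = u s - v s) -> Nlin f = Nplus u - Nplus v.
Proof.
move=> u_nb v_nb fE.
have f_bd : bounded f.
  by have [b uvb] := boundedD u_nb.2 (boundedN v_nb.2); exists b => s; rewrite fE.
have : Nplus (posp f) + Nplus v = Nplus (negp f) + Nplus u.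
  rewrite -!NplusD //; try exact: nonneg_bounded_posp; try exact: nonneg_bounded_negp.
  by congr Nplus; apply: funext => s; have := posp_negp f s; rewrite fE; lra.
rewrite /Nlin; lra.
Qed.

Lemma Nlin_nonneg f : nonneg_bounded f -> Nlin f = Nplus f.
Proof.
move=> f_nb; rewrite (Nlin_decomp f_nb (nonneg_bounded_cst (lexx 0))) ?Nplus0 ?subr0 //.
by move=> s; rewrite subr0.
Qed.

Lemma Nlin_linear k f g : bounded f -> bounded g ->
  Nlin (fun s => k * f s + g s) = k * Nlin f + Nlin g.
Proof.
move=> f_bd g_bd.
have [pf nf] := (nonneg_bounded_posp f_bd, nonneg_bounded_negp f_bd).
have [pg ng] := (nonneg_bounded_posp g_bd, nonneg_bounded_negp g_bd).
have [k0|k_lt0] := lerP 0 k.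
  rewrite (@Nlin_decomp _ (fun s => k * posp f s + posp g s) (fun s => k * negp f s + negp g s)).
  - by rewrite !NplusD ?NplusZ /Nlin //; try exact: nonneg_boundedZ; ring.
  - by apply: nonneg_boundedD => //; exact: nonneg_boundedZ.
  - by apply: nonneg_boundedD => //; exact: nonneg_boundedZ.
  - by move=> s; rewrite (posp_negp f s) (posp_negp g s); ring.
have Nk0 : 0 <= - k by rewrite oppr_ge0 ltW.
rewrite (@Nlin_decomp _ (fun s => - k * negp f s + posp g s) (fun s => - k * posp f s + negp g s)).
- by rewrite !NplusD ?NplusZ /Nlin //; try exact: nonneg_boundedZ; ring.
- by apply: nonneg_boundedD => //; exact: nonneg_boundedZ.
- by apply: nonneg_boundedD => //; exact: nonneg_boundedZ.
- by move=> s; rewrite (posp_negp f s) (posp_negp g s); ring.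
Qed.

Lemma Nlin_mono f g : bounded f -> bounded g -> (forall s, f s <= g s) -> Nlin f <= Nlin g.
Proof.
move=> f_bd g_bd fg.
have gf_nb : nonneg_bounded (fun s => g s - f s).
  by split; [move=> s; rewrite subr_ge0 | apply: boundedD => //; exact: boundedN].
have -> : Nlin g = 1 * Nlin (fun s => g s - f s) + Nlin f.
  rewrite -Nlin_linear //; last exact: gf_nb.2.
  by congr Nlin; apply: funext => s; ring.
by rewrite mul1r lerDr Nlin_nonneg // Nplus_ge0.
Qed.

Lemma Nlin_comp j f : bounded f -> Nlin (fun t => f (act j t)) = Nlin f.
Proof.
move=> f_bd; have [pf nf] := (nonneg_bounded_posp f_bd, nonneg_bounded_negp f_bd).
rewrite (@Nlin_decomp _ (fun t => posp f (act j t)) (fun t => negp f (act j t))).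
- by rewrite !Nplus_comp.
- exact: nonneg_bounded_comp.
- exact: nonneg_bounded_comp.
- by move=> s; rewrite -posp_negp.
Qed.

Lemma Nplus1_ge1 : 1 <= Nplus (fun _ => 1).
Proof.
rewrite -[X in X <= _]N_augm; apply: Nplus_ub; first exact: nonneg_bounded_cst.
by move=> s; rewrite /augm ler01 lexx.
Qed.

Definition Nmean f := Nlin f / Nplus (fun _ => 1).

Lemma Nmean_linear k f g : bounded f -> bounded g ->
  Nmean (fun s => k * f s + g s) = k * Nmean f + Nmean g.
Proof. by move=> f_bd g_bd; rewrite /Nmean Nlin_linear // mulrDl mulrA. Qed.

Lemma Nmean_mono f g : bounded f -> bounded g -> (forall s, f s <= g s) -> Nmean f <= Nmean g.
Proof.
move=> f_bd g_bd fg; rewrite /Nmean ler_wpM2r ?Nlin_mono //.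
by rewrite invr_ge0 (le_trans ler01 Nplus1_ge1).
Qed.

Lemma Nmean_comp j f : bounded f -> Nmean (fun t => f (act j t)) = Nmean f.
Proof. by move=> f_bd; rewrite /Nmean Nlin_comp. Qed.

Lemma Nmean_cst b : Nmean (fun _ => b) = b.
Proof.
have nb1 := nonneg_bounded_cst ler01; have nb0 := nonneg_bounded_cst (lexx 0).
have := Nlin_linear b nb1.2 nb0.2.
rewrite (Nlin_nonneg nb1) (Nlin_nonneg nb0) Nplus0 !addr0.
under eq_fun do rewrite mulr1.
by rewrite /Nmean => ->; rewrite mulfK // gt_eqF // (lt_le_trans ltr01 Nplus1_ge1).
Qed.

Definition cmean (f : S -> R[i]) : R[i] :=
  Nmean (fun s => Re (f s)) +i* Nmean (fun s => Im (f s)).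

Lemma cmean_linear (k : R[i]) (f g : S -> R[i]) : bounded f -> bounded g ->
  cmean (fun s => k * f s + g s) = k * cmean f + cmean g.
Proof.
move=> f_bd g_bd; have [Ref Imf] := (bounded_Re f_bd, bounded_Im f_bd).
have [Reg Img] := (bounded_Re g_bd, bounded_Im g_bd).
rewrite /cmean; under eq_fun do rewrite Re_mulD.
under [X in _ +i* Nmean X]eq_fun do rewrite Im_mulD.
rewrite !Nmean_linear //; try by apply: boundedD => //; exact: boundedZ.
by case: k => a b; simpc => /=; congr (_ +i* _); ring.
Qed.

Lemma cmean0 : cmean (fun _ => 0) = 0.
Proof. by rewrite /cmean !Nmean_cst. Qed.

Lemma cmean_comp j (f : S -> R[i]) : bounded f -> cmean (fun t => f (act j t)) = cmean f.
Proof.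
by move=> f_bd; rewrite /cmean (Nmean_comp j (bounded_Re f_bd)) (Nmean_comp j (bounded_Im f_bd)).
Qed.

Lemma cmean_augm : cmean (@augm R[i] S) = 1.
Proof. by rewrite /cmean !Nmean_cst. Qed.

Lemma cmean_norm_le : normBD_le cmean 1.
Proof.
move=> f c c0 fc; have f_bd : bounded f by exists c.
(* Rotating f by the conjugate of its mean z gives a function of mean |z|^2,
   whose real part is bounded by |z| c. *)
set z := cmean f; pose g s := z^* * f s.
have g_bd : bounded g := boundedZ _ f_bd.
have cmean_g : cmean g = `|z| ^+ 2.
  rewrite sqr_normc mulrC -[RHS]addr0 -cmean0 -cmean_linear //; last exact: bounded_cst.
  by congr cmean; apply: funext => s; rewrite addr0.
pose nz := Re `|z|; pose r := Re c.
have zE : `|z| = nz%:C by rewrite RRe_real // normr_real.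
have cE : c = r%:C by rewrite RRe_real // ger0_real.
have nz0 : 0 <= nz by rewrite -ler0c -zE.
have r0 : 0 <= r by rewrite -ler0c -cE.
have Re_g_le s : Re (g s) <= nz * r.
  have : `|g s| <= `|z| * c by rewrite normrM normcJ ler_wpM2l.
  by move/Re_norm_le; rewrite zE cE -rmorphM; apply: le_trans (ler_norm _).
have := Nmean_mono (bounded_Re g_bd) (bounded_cst (nz * r)) Re_g_le.
rewrite Nmean_cst -[Nmean _]/(Re (cmean g)) cmean_g zE -rmorphXn /= => nz2_le.
by rewrite mul1r cE lecR; nra.
Qed.

Lemma cmean_invariant_mean : invariant_mean act cmean.
Proof.
split.
- by split; [move=> k f g f_bd g_bd; exact: cmean_linear | exists 1; exact: cmean_norm_le].
- by move=> j f; exact: cmean_comp.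
- split=> [|c cmean_c]; first exact: cmean_norm_le.
  by have := cmean_c _ _ ler01 supnorm_le_augm; rewrite cmean_augm normr1 mulr1.
- exact: cmean_augm.
Qed.

End DayMean.

Lemma invariant_mean_of_functional (R : realType) (S J : Type) (act : J -> S -> S)
    (N : BD R[i] S) :
  isBD N -> N (@augm R[i] S) != 0 -> invariant act N ->
  exists M : BD R[i] S, invariant_mean act M.
Proof.
move=> N_BD N1_neq0 N_inv; pose N' f := N f / N (@augm R[i] S).
have [N'_lin [c N'_c]] : isBD N' := isBD_mulr N_BD _.
pose Nr (u : S -> R) := Re (N' (fun s => (u s)%:C)).
have Nr_BD : isBD Nr.
  split=> [k u v u_bd v_bd|].
    rewrite /Nr (_ : (fun s => _) = fun s => k%:C * (u s)%:C + (v s)%:C); last first.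
      by apply: funext => s; rewrite rmorphD rmorphM.
    rewrite N'_lin; try exact: bounded_real_complex.
    by rewrite Re_mulD /=; ring.
  exists (Re c) => u b b0 ub; rewrite -Re_mulr_real; apply: Re_norm_le; apply: N'_c.
    by rewrite ler0c.
  by move=> s; rewrite normc_real lecR.
have Nr_inv : invariant act Nr.
  by move=> j u u_bd; rewrite /Nr /N' (N_inv j _ (bounded_real_complex u_bd)).
have Nr_augm : Nr (@augm R S) = 1 by rewrite /Nr /N' mulfV.
by exists (cmean Nr); exact: cmean_invariant_mean Nr_BD Nr_inv Nr_augm.
Qed.

Section TensorFunctionals.
Variables (K : numFieldType) (S : Type).
Implicit Types (u : TP K S) (f g : S -> K).

Definition tp_sums u f (n : nat) : K := \sum_(i < n) (u i).1 f * (u i).2 (@augm K S).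

Definition tp_functional u : BD K S := fun f => limn (tp_sums u f).

Definition tp_swap u : TP K S := fun n => ((u n).2, (u n).1).

Lemma isTP_swap u : isTP u -> isTP (tp_swap u).
Proof.
move=> [u_BD [c [d [M [cd cdM]]]]]; split=> [n|]; first by have [] := u_BD n.
exists d, c, M; split=> [n|n]; first by have [? [? [? ?]]] := cd n.
by under eq_bigr do rewrite mulrC.
Qed.

Lemma limn_norm_le (x : nat -> K) (b : K) : cvgn x -> (forall n, `|x n| <= b) ->
  `|limn x| <= b.
Proof.
move=> x_cvg xb; apply/ler_addgt0Pr => e e0.
move/cvgr_dist_lt: x_cvg => /(_ e e0) -[n _ /(_ n (leqnn n)) xn].
rewrite -(subrK (x n) (limn x)); apply: le_trans (ler_normD _ _) _.
by rewrite addrC lerD // ltW.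
Qed.

Lemma tp_sums_linear u k f g : (forall n, isBD (u n).1) -> bounded f -> bounded g ->
  tp_sums u (fun s => k * f s + g s) = fun n => k * tp_sums u f n + tp_sums u g n.
Proof.
move=> u_BD f_bd g_bd; apply: funext => n; rewrite /tp_sums mulr_sumr -big_split.
by apply: eq_bigr => i _; rewrite (u_BD i).1 // mulrDl mulrA.
Qed.

Lemma tp_functional_isBD u : isTP u -> (forall f, bounded f -> cvgn (tp_sums u f)) ->
  isBD (tp_functional u).
Proof.
move=> [u_BD [c [d [M [cd cdM]]]]] u_cvg; split=> [k f g f_bd g_bd|].
  rewrite /tp_functional tp_sums_linear //; last by move=> n; exact: (u_BD n).1.
  apply: cvg_lim => //; apply: cvgD; last exact: u_cvg.
  exact: cvgMl_tmp (u_cvg f f_bd).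
exists M => f b b0 fb; apply: limn_norm_le; first by apply: u_cvg; exists b.
move=> n; apply: le_trans (ler_norm_sum _ _ _) _.
apply: le_trans (_ : \sum_(i < n) c i * d i * b <= _); last by rewrite -mulr_suml ler_wpM2r.
apply: ler_sum => i _; have [_ [_ [ci di]]] := cd i; rewrite normrM.
have := ler_pM (normr_ge0 _) (normr_ge0 _) (ci f b b0 fb) (di _ 1 ler01 supnorm_le_augm).
by rewrite mulr1 mulrAC.
Qed.

Definition sums_invariant (J : Type) (act : J -> S -> S) u :=
  forall j f, bounded f ->
    exists l : K, tp_sums u (fun t => f (act j t)) @ \oo --> l /\ tp_sums u f @ \oo --> l.

Lemma sums_invariant_cvg (J : Type) (act : J -> S -> S) u (j : J) :
  sums_invariant act u -> forall f, bounded f -> cvgn (tp_sums u f).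
Proof. by move=> u_inv f f_bd; have [l [_ ul]] := u_inv j f f_bd; apply/cvg_ex; exists l. Qed.

Lemma tp_functional_invariant (J : Type) (act : J -> S -> S) u :
  sums_invariant act u -> invariant act (tp_functional u).
Proof.
move=> u_inv j f f_bd; have [l [ufj uf]] := u_inv j f f_bd.
by rewrite /tp_functional (cvg_lim _ ufj) // (cvg_lim _ uf).
Qed.

Lemma tp_functional_swap_augm u :
  tp_functional (tp_swap u) (@augm K S) = tp_functional u (@augm K S).
Proof.
rewrite /tp_functional /tp_sums; congr (lim (_ @ \oo)); apply: funext => n.
by apply: eq_bigr => i _; rewrite mulrC.
Qed.

Lemma piA_augm (op : S -> S -> S) u : (forall n, isBD (u n).1) ->
  piA op u (@augm K S) = tp_functional u (@augm K S).
Proof.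
move=> u_BD; rewrite /piA /tp_functional /tp_sums; congr (lim (_ @ \oo)); apply: funext => n.
by apply: eq_bigr => i _; rewrite /arens (BD_linear_cst (u_BD i) ((u i).2 (@augm K S))) mulrC.
Qed.

Lemma evBD_isBD s : isBD (@evBD K S s).
Proof. by split=> //; exists 1 => f b _ fb; rewrite mul1r; exact: fb. Qed.

Lemma isBB_mul f g : bounded f -> bounded g -> isBB (fun x y : BD K S => x f * y g).
Proof.
move=> [bf fb] [bg gb]; split; [|split].
- by move=> k a a' b _ _ _; rewrite mulrDl mulrA.
- by move=> k a b b' _ _ _; rewrite mulrDr mulrCA.
exists (`|bf| * `|bg|) => a b ca cb _ _ a_ca b_cb; rewrite normrM.
have := ler_pM (normr_ge0 _) (normr_ge0 _) (a_ca f `|bf| (normr_ge0 _) (supnorm_le_normr fb))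
  (b_cb g `|bg| (normr_ge0 _) (supnorm_le_normr gb)).
by have -> : `|bf| * `|bg| * ca * cb = ca * `|bf| * (cb * `|bg|) by ring.
Qed.

End TensorFunctionals.

Arguments evBD_isBD {K S}.

Section CommutingTensor.
Variables (K : numFieldType) (S : Type) (op : S -> S -> S) (u : TP K S).
Hypothesis u_comm : forall s, eqTP (actL op (@evBD K S s) u) (actR op u (@evBD K S s)).

Lemma commuting_sums_left : sums_invariant op u.
Proof.
move=> s f f_bd; have [l [ul ur]] := u_comm s (isBB_mul f_bd (bounded_cst 1)).
by exists l.
Qed.

Lemma commuting_sums_right : sums_invariant (fun s t => op t s) (tp_swap u).
Proof.
have swapE h : tp_sums (tp_swap u) h = fun n => \sum_(i < n) (u i).1 (@augm K S) * (u i).2 h.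
  by apply: funext => n; apply: eq_bigr => i _; rewrite mulrC.
move=> s f f_bd; have [l [ul ur]] := u_comm s (isBB_mul (bounded_cst 1) f_bd).
by exists l; rewrite !swapE.
Qed.

End CommutingTensor.

Theorem mainTheorem2 (R : realType) (S : Type) (op : S -> S -> S)
  (op_assoc : forall x y z, op x (op y z) = op (op x y) z)
  (S_nonempty : inhabited S) :
  @bidual_pseudo_contractible R[i] S op -> @amenable R[i] S op.
Proof.
move=> [I [le [m [[_ le_refl _ _] [m_TP [m_comm m_approx]]]]]]; have [s0] := S_nonempty.
have [i0 near_i0] := m_approx _ (evBD_isBD s0) (1 / 2) (divr_gt0 ltr01 (ltr0Sn _ 1)).
pose u := m i0; have u_comm s := m_comm _ (evBD_isBD s) i0.
have u_BD n : isBD (u n).1 := ((m_TP i0).1 n).1.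
have left_neq0 : tp_functional u (@augm R[i] S) != 0.
  have : `|piA op u (@augm R[i] S) - 1| <= 1 / 2 * 1 :=
    near_i0 i0 (le_refl i0) _ _ ler01 supnorm_le_augm.
  rewrite -(piA_augm op) //; apply: contraTneq => ->.
  by rewrite sub0r normrN normr1 mulr1 ler_pdivlMr ?ltr0n // mul1r lern1.
have right_neq0 : tp_functional (tp_swap u) (@augm R[i] S) != 0.
  by rewrite tp_functional_swap_augm.
have [ML [ML_BD ML_inv ML_norm ML_augm]] := invariant_mean_of_functional
  (tp_functional_isBD (m_TP i0) (sums_invariant_cvg s0 (commuting_sums_left u_comm)))
  left_neq0 (tp_functional_invariant (commuting_sums_left u_comm)).
have [MR [MR_BD MR_inv MR_norm MR_augm]] := invariant_mean_of_functional
  (tp_functional_isBD (isTP_swap (m_TP i0)) (sums_invariant_cvg s0 (commuting_sums_right u_comm)))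
  right_neq0 (tp_functional_invariant (commuting_sums_right u_comm)).
by split; [exists ML | exists MR].
Qed.
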